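(* Let $X$ be a compact metric space, $f\colon X\to X$ continuous with $h_{\mathrm{top}}(f)<\infty$, and $\Phi,\Psi\in C(X)^d$. If $A\subset\mathbb{R}^d$ is compact, then for every $\xi\in C(X)$, $$\overline{\mathcal{F}}(A,\xi)=\sup_{\alpha\in A}\overline{\mathcal{F}}(\{\alpha\},\xi).$$
   Context: $S_n\phi(x)=\sum_{k=0}^{n-1}\phi(f^kx)$; $B(x,n,\delta)=\{y\mid d(f^kx,f^ky)<\delta\text{ for }0\le k\le n\}$. $\Phi=(\varphi_1,\dots,\varphi_d)$, $\Psi=(\psi_1,\dots,\psi_d)$, $\mathcal{A}_n(x)=(S_n\varphi_i(x)/S_n\psi_i(x))_{i=1}^d$, and for open $U\subset\mathbb{R}^d$, $G_n(U)=\{x\in X\mid\mathcal{A}_n(x)\in U\}$. For a sequence $(Z_n)$ of subsets of $X$, $\Lambda_n(Z_n,\xi,\delta)=\inf\{\sum_{x\in E}e^{S_n\xi(x)}\mid\bigcup_{x\in E}B(x,n,\delta)\supset Z_n\}$ and $\overline{CP}_{(Z_n)}(\xi)=\lim_{\delta\to0}\limsup_{n\to\infty}\frac1n\log\Lambda_n(Z_n,\xi,\delta)$. The upper coarse spectrum is $\overline{\mathcal{F}}(A,\xi)=\inf_{U\supset A}\overline{CP}_{(G_n(U))}(\xi)$, the infimum over all open $U\subset\mathbb{R}^d$ containing $A$. *)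

From HB Require Import structures.
From mathcomp Require Import all_boot all_order all_algebra.
From mathcomp Require Import all_classical all_reals all_analysis.
Set Implicit Arguments. Unset Strict Implicit. Unset Printing Implicit Defensive.
Import Order.TTheory GRing.Theory Num.Theory.
Import numFieldNormedType.Exports.
Local Open Scope classical_set_scope.
Local Open Scope ring_scope.

Section Defs.
Variables (R : realType) (X : metricType R).

Definition birkhoff (f : X -> X) (n : nat) (phi : X -> R) (x : X) : R :=
  \sum_(k < n) phi (iter k f x).

Definition bowen_ball (f : X -> X) (x : X) (n : nat) (delta : R) : set X :=
  [set y | forall k : nat, (k <= n)%N -> mdist (iter k f x) (iter k f y) < delta].

Definition Lambda (f : X -> X) (n : nat) (Z : set X) (xi : X -> R) (delta : R)
  : \bar R :=
  ereal_inf [set ((\sum_(x <- E) expR (birkhoff f n xi x))%:E : \bar R) |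
             E in [set E : seq X | Z `<=` \bigcup_(x in [set` E]) bowen_ball f x n delta]].

Definition elog (a : \bar R) : \bar R :=
  match a with
  | EFin r => if r <= 0 then -oo%E else (ln r)%:E
  | EPInf => +oo%E
  | ENInf => -oo%E
  end.

Definition upper_cap_pressure (f : X -> X) (Z : nat -> set X) (xi : X -> R)
  : \bar R :=
  lim ((fun delta : R =>
          limn_esup (fun n : nat => (((n%:R)^-1)%:E * elog (Lambda f n (Z n) xi delta))%E))
       @ 0^'+).

Definition htop (f : X -> X) : \bar R :=
  upper_cap_pressure f (fun _ => [set: X]) (fun _ => 0).

Variable d : nat.

Definition Aavg (f : X -> X) (Phi Psi : 'I_d -> X -> R) (n : nat) (x : X)
  : 'rV[R]_d :=
  \row_i (birkhoff f n (Phi i) x / birkhoff f n (Psi i) x).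

Definition Gset (f : X -> X) (Phi Psi : 'I_d -> X -> R) (U : set 'rV[R]_d)
  (n : nat) : set X :=
  [set x | U (Aavg f Phi Psi n x)].

Definition upper_coarse_spectrum (f : X -> X) (Phi Psi : 'I_d -> X -> R)
  (A : set 'rV[R]_d) (xi : X -> R) : \bar R :=
  ereal_inf [set upper_cap_pressure f (Gset f Phi Psi U) xi |
             U in [set U : set 'rV[R]_d | open U /\ A `<=` U]].

End Defs.

From HB Require Import structures.
From mathcomp Require Import all_boot all_order all_algebra.
From mathcomp Require Import all_classical all_reals all_analysis.
From mathcomp Require Import lra finmap.
Import Order.TTheory GRing.Theory Num.Theory.
Import numFieldNormedType.Exports.
Local Open Scope classical_set_scope.
Local Open Scope ring_scope.

(* Merging two covers of [Z1] and [Z2] into a cover of [Z1 `|` Z2] at most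
   doubles [Lambda], which is invisible at the exponential scale, so the upper
   capacity pressure of a union of two sequences of sets is the maximum of
   their pressures.  If every [{alpha}], [alpha] in the compact set [A], has
   spectrum below [m], each [alpha] has an open neighbourhood [U] with
   [CP_(G_n(U)) < m]; finitely many of them cover [A], and [G_n] of their union
   is the union of the [G_n]'s. *)

Section extended_real_facts.
Context {R : realType}.
Implicit Types (a b x M : \bar R) (u v : (\bar R)^nat).
Local Open Scope ereal_scope.

Lemma lte_EFin_between a b : a < b -> exists r : R, a < r%:E < b.
Proof.
case: a => [a| |]; case: b => [b| |] //= ab.
- rewrite lte_fin in ab; exists ((a + b) / 2)%R.
  by rewrite !lte_fin; apply/andP; split; lra.
- by exists (a + 1)%R; rewrite ltry lte_fin andbT; lra.
- by exists (b - 1)%R; rewrite ltNyr lte_fin; lra.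
- by exists 0%R; rewrite ltNyr ltry.
Qed.

Lemma lee_EFin_ub x M : (forall r : R, M < r%:E -> x <= r%:E) -> x <= M.
Proof.
move=> ub; rewrite leNgt; apply/negP => /lte_EFin_between [r /andP [Mr rx]].
by move: (ub r Mr); rewrite leNgt rx.
Qed.

Lemma limn_esup_lt u m : limn_esup u < m -> \forall n \near \oo, u n < m.
Proof.
move=> /ereal_inf_lt [_ [V HV <-] Vm]; apply: filterS HV => n Vn.
by apply: le_lt_trans Vm; apply: ereal_sup_ubound; exists n.
Qed.

Lemma limn_esup_le_near u m : (\forall n \near \oo, u n <= m) -> limn_esup u <= m.
Proof.
move=> [N _ uNm]; apply: (@le_trans _ _ (ereal_sup (u @` [set n | (N <= n)%N]))).
  by apply: ereal_inf_lbound; exists [set n | (N <= n)%N] => //; exists N.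
by apply: ge_ereal_sup => _ [n Nn <-]; exact: uNm.
Qed.

Lemma le_limn_esup u v : (forall n, u n <= v n) -> limn_esup u <= limn_esup v.
Proof.
move=> uv; apply: le_ereal_inf_tmp => _ [V HV <-].
apply: le_trans; first by apply: ereal_inf_lbound; exists V.
apply: ge_ereal_sup => _ [n Vn <-].
by apply: le_ereal_sup_tmp; exists (v n) => //; exists n.
Qed.

Lemma elog_le a b : 0 <= a -> a <= b -> elog a <= elog b.
Proof.
case: a => [a| |] //; case: b => [b| |] //= a0 ab; rewrite ?leey //.
rewrite !lee_fin in a0 ab.
have [a_le0|a_gt0] := leP a 0%R; first by rewrite leNye.
have b_gt0 := lt_le_trans a_gt0 ab.
by rewrite [(b <= 0)%R]leNgt b_gt0 lee_fin ler_ln ?posrE.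
Qed.

Lemma elogEFin (r : R) : (0 < r)%R -> elog r%:E = (ln r)%:E.
Proof. by move=> r_gt0 /=; rewrite leNgt r_gt0. Qed.

Lemma elog_lt_expR {a} {r : R} : 0 <= a -> elog a < r%:E -> a < (expR r)%:E.
Proof.
case: a => [a| |] //= a0; rewrite lee_fin in a0.
have [a_le0 _|/negbT] := ifP; first by rewrite lte_fin (le_lt_trans a_le0) ?expR_gt0.
by rewrite -ltNge !lte_fin => a_gt0 ln_lt; rewrite -(lnK a_gt0) ltr_expR.
Qed.

End extended_real_facts.

Section capacity_pressure.
Context {R : realType} {X : metricType R} (f : X -> X) (xi : X -> R).
Implicit Types (Z : set X) (n : nat) (delta : R).

Lemma Lambda_ge0 n Z delta : (0 <= Lambda f n Z xi delta)%E.
Proof.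
apply: le_ereal_inf_tmp => _ [E _ <-].
by rewrite lee_fin; apply: sumr_ge0 => x _; rewrite expR_ge0.
Qed.

Lemma le_Lambda_delta n Z delta delta' : delta <= delta' ->
  (Lambda f n Z xi delta' <= Lambda f n Z xi delta)%E.
Proof.
move=> le_delta; apply: ereal_inf_le_tmp => _ [E EZ <-]; exists E => //.
move=> z /EZ [x Ex Bx]; exists x => // k kn.
exact: lt_le_trans (Bx k kn) le_delta.
Qed.

Lemma le_Lambda_set n Z Z' delta : Z `<=` Z' ->
  (Lambda f n Z xi delta <= Lambda f n Z' xi delta)%E.
Proof.
by move=> ZZ'; apply: ereal_inf_le_tmp => _ [E EZ' <-]; exists E => // z /ZZ' /EZ'.
Qed.

Lemma Lambda_set0 n delta : Lambda f n set0 xi delta = 0%E.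
Proof.
apply/eqP; rewrite eq_le Lambda_ge0 andbT.
by apply: ereal_inf_lbound; exists [::] => //; rewrite big_nil.
Qed.

Lemma Lambda_setU_lt {n Z1 Z2 delta} {a b : R} :
  (Lambda f n Z1 xi delta < a%:E)%E -> (Lambda f n Z2 xi delta < b%:E)%E ->
  (Lambda f n (Z1 `|` Z2) xi delta <= (a + b)%:E)%E.
Proof.
move=> /ereal_inf_lt [_ [E1 E1Z1 <-]]; rewrite lte_fin => E1a.
move=> /ereal_inf_lt [_ [E2 E2Z2 <-]]; rewrite lte_fin => E2b.
have cover_le : (Lambda f n (Z1 `|` Z2) xi delta <=
    (\sum_(x <- E1 ++ E2) expR (birkhoff f n xi x))%:E)%E.
  apply: ereal_inf_lbound; exists (E1 ++ E2) => //.
  by move=> z [/E1Z1|/E2Z2] [x xE Bx]; exists x => //=; rewrite mem_cat xE ?orbT.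
by apply: (le_trans cover_le); rewrite lee_fin big_cat /= lerD // ltW.
Qed.

Definition Lambda_rate n Z delta : \bar R :=
  ((n%:R^-1)%:E * elog (Lambda f n Z xi delta))%E.

Lemma le_Lambda_rate n Z Z' delta delta' : Z `<=` Z' -> delta' <= delta ->
  (Lambda_rate n Z delta <= Lambda_rate n Z' delta')%E.
Proof.
move=> ZZ' le_delta; apply: lee_wpmul2l; first by rewrite lee_fin invr_ge0.
apply: elog_le; first exact: Lambda_ge0.
apply: (@le_trans _ _ (Lambda f n Z' xi delta)); first exact: le_Lambda_set.
exact: le_Lambda_delta.
Qed.

(* Doubling the cost of a cover costs [ln 2 / n] on the exponential scale. *)
Lemma Lambda_rate_setU {n Z1 Z2 delta r} : (0 < n)%N ->
  (Lambda_rate n Z1 delta < r%:E)%E -> (Lambda_rate n Z2 delta < r%:E)%E ->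
  (Lambda_rate n (Z1 `|` Z2) delta <= (n%:R^-1 * ln 2 + r)%:E)%E.
Proof.
move=> n_gt0; have n_gt0' : (0 : R) < n%:R by rewrite ltr0n.
rewrite /Lambda_rate !lte_pdivrMl // -!EFinM.
move=> /(elog_lt_expR (Lambda_ge0 _ _ _)) lt1 /(elog_lt_expR (Lambda_ge0 _ _ _)) lt2.
have := Lambda_setU_lt lt1 lt2; rewrite -mulr2n => le12.
rewrite lee_pdivrMl // -EFinM.
have -> : n%:R * (n%:R^-1 * ln 2 + r) = ln (expR (n%:R * r) *+ 2) :> R.
  rewrite -[expR _ *+ 2]mulr_natr lnM ?posrE ?expR_gt0 // expRK.
  by rewrite mulrDr mulrA mulfV ?gt_eqF // mul1r addrC.
rewrite -elogEFin ?pmulrn_lgt0 ?expR_gt0 //.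
exact: elog_le (Lambda_ge0 _ _ _) le12.
Qed.

Definition cap_pressure_at (Z : nat -> set X) delta : \bar R :=
  limn_esup (fun n => Lambda_rate n (Z n) delta).

Lemma cap_pressure_at_setU (Z1 Z2 : nat -> set X) delta :
  (cap_pressure_at (fun n => Z1 n `|` Z2 n) delta <=
   Order.max (cap_pressure_at Z1 delta) (cap_pressure_at Z2 delta))%E.
Proof.
apply: lee_EFin_ub => m /lte_EFin_between [r /andP []].
rewrite gt_max lte_fin => /andP [/limn_esup_lt lt1 /limn_esup_lt lt2] rm.
have [N ln2_lt_N] : exists N : nat, ln 2 / (m - r) < N%:R.
  exists (Num.Def.archi_bound (ln 2 / (m - r))); apply: archi_boundP.
  by rewrite divr_ge0 ?ln_ge0 ?ler1n // subr_ge0 ltW.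
apply: limn_esup_le_near; near=> n.
have n_gt0 : (0 < n)%N by near: n; exists 1%N.
have lt1n : (Lambda_rate n (Z1 n) delta < r%:E)%E by near: n.
have lt2n : (Lambda_rate n (Z2 n) delta < r%:E)%E by near: n.
apply: (le_trans (Lambda_rate_setU n_gt0 lt1n lt2n)).
rewrite lee_fin -lerBrDr ler_pdivrMl ?ltr0n //.
rewrite -ler_pdivrMr ?subr_gt0 //; apply: ltW; apply: lt_le_trans ln2_lt_N _.
by rewrite ler_nat; near: n; exists N.
Unshelve. all: by end_near.
Qed.

Lemma le_cap_pressure_at (Z Z' : nat -> set X) delta delta' :
  (forall n, Z n `<=` Z' n) -> delta' <= delta ->
  (cap_pressure_at Z delta <= cap_pressure_at Z' delta')%E.
Proof. by move=> ZZ' le_delta; apply: le_limn_esup => n; exact: le_Lambda_rate. Qed.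

Lemma upper_cap_pressure_supE (Z : nat -> set X) :
  upper_cap_pressure f Z xi = ereal_sup (cap_pressure_at Z @` `]0, +oo[).
Proof.
apply/cvg_lim => //; apply: (nonincreasing_at_right_cvge (BInfty _ false)) => //.
by move=> delta delta' _ _; apply: le_cap_pressure_at => n x.
Qed.

Lemma le_upper_cap_pressure (Z Z' : nat -> set X) : (forall n, Z n `<=` Z' n) ->
  (upper_cap_pressure f Z xi <= upper_cap_pressure f Z' xi)%E.
Proof.
move=> ZZ'; rewrite !upper_cap_pressure_supE.
apply: ge_ereal_sup => _ [delta delta0 <-].
apply: le_ereal_sup_tmp; exists (cap_pressure_at Z' delta); first by exists delta.
exact: le_cap_pressure_at.
Qed.

Lemma upper_cap_pressure_setU (Z1 Z2 : nat -> set X) :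
  (upper_cap_pressure f (fun n => Z1 n `|` Z2 n) xi <=
   Order.max (upper_cap_pressure f Z1 xi) (upper_cap_pressure f Z2 xi))%E.
Proof.
rewrite !upper_cap_pressure_supE; apply: ge_ereal_sup => _ [delta delta0 <-].
apply: le_trans (cap_pressure_at_setU _ _ _) _.
by rewrite ge_max !le_max; apply/andP; split; apply/orP; [left|right];
  apply: ereal_sup_ubound; exists delta.
Qed.

Lemma upper_cap_pressure_set0 : upper_cap_pressure f (fun=> set0) xi = -oo%E.
Proof.
apply/eqP; rewrite -leeNy_eq upper_cap_pressure_supE.
apply: ge_ereal_sup => _ [delta _ <-]; apply: limn_esup_le_near; near=> n.
rewrite /Lambda_rate Lambda_set0 /= lexx mulrNy gtr0_sg ?invr_gt0 ?ltr0n ?mul1e //.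
by near: n; exists 1%N.
Unshelve. all: by end_near.
Qed.

Lemma upper_cap_pressure_bigcup_le {I : eqType} (s : seq I)
    (Z : I -> nat -> set X) (m : \bar R) :
  (forall i, i \in s -> (upper_cap_pressure f (Z i) xi <= m)%E) ->
  (upper_cap_pressure f (fun n => \bigcup_(i in [set` s]) Z i n) xi <= m)%E.
Proof.
elim: s => [|i s IH] Zs_le.
  apply: (@le_trans _ _ (upper_cap_pressure f (fun=> set0) xi)).
    by apply: le_upper_cap_pressure => n x [].
  by rewrite upper_cap_pressure_set0 leNye.
apply: (@le_trans _ _ (upper_cap_pressure f (fun n =>
    Z i n `|` \bigcup_(j in [set` s]) Z j n) xi)).
  apply: le_upper_cap_pressure => n x [j]; rewrite /= inE => /orP [/eqP ->|js] Zjx.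
    by left.
  by right; exists j.
apply: le_trans (upper_cap_pressure_setU _ _) _.
rewrite ge_max Zs_le ?mem_head //= IH // => j js.
by rewrite Zs_le // inE js orbT.
Qed.

End capacity_pressure.

Section upper_coarse_spectrum.
Context {R : realType} {X : metricType R} (f : X -> X) {d : nat}
  (Phi Psi : 'I_d -> X -> R) (xi : X -> R).
Local Notation spectrum A := (upper_coarse_spectrum f Phi Psi A xi).

Lemma le_upper_coarse_spectrum (A B : set 'rV[R]_d) :
  A `<=` B -> (spectrum A <= spectrum B)%E.
Proof.
move=> AB; apply: ereal_inf_le_tmp => _ [U [oU BU] <-].
by exists U => //; split => //; exact: subset_trans BU.
Qed.

Lemma upper_coarse_spectrum_compact_le (A : set 'rV[R]_d) (m : \bar R) :
  compact A -> (forall a, A a -> (spectrum [set a] < m)%E) -> (spectrum A <= m)%E.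
Proof.
move=> cA lt_m.
have /choice [U HU] : forall a, exists U : set 'rV[R]_d, A a ->
    [/\ open U, U a & (upper_cap_pressure f (Gset f Phi Psi U) xi < m)%E].
  move=> a; have [Aa|nAa] := pselect (A a); last by exists set0 => /nAa.
  have /ereal_inf_lt [_ [V [oV aV] <-] Vm] := lt_m a Aa.
  by exists V => _; split => //; exact: aV.
move: cA; rewrite compact_cover => /(_ _ A U) [].
- by move=> a /HU [].
- by move=> a Aa; exists a => //; have [] := HU a Aa.
move=> D DA AD.
apply: (@le_trans _ _ (upper_cap_pressure f
    (Gset f Phi Psi (cover [set` D] U)) xi)).
  apply: ereal_inf_lbound; exists (cover [set` D] U) => //; split => //.
  by apply: bigcup_open => a /= aD; have [] := HU a (set_mem (DA _ aD)).
apply: (upper_cap_pressure_bigcup_le f xi D (fun a => Gset f Phi Psi (U a))) => a aD.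
by have [_ _ /ltW] := HU a (set_mem (DA _ aD)).
Qed.

End upper_coarse_spectrum.

Theorem proposition2p1 (R : realType) (X : metricType R)
  (hX : compact [set: X]) (f : X -> X) (hf : continuous f)
  (hent : (htop f < +oo)%E)
  (d : nat) (Phi Psi : 'I_d -> X -> R)
  (hPhi : forall i, continuous (Phi i)) (hPsi : forall i, continuous (Psi i))
  (A : set 'rV[R]_d) (hA : compact A)
  (xi : X -> R) (hxi : continuous xi) :
  upper_coarse_spectrum f Phi Psi A xi =
  ereal_sup [set upper_coarse_spectrum f Phi Psi [set alpha] xi | alpha in A].
Proof.
apply/eqP; rewrite eq_le; apply/andP; split.
  apply: lee_EFin_ub => m sup_lt_m.
  apply: upper_coarse_spectrum_compact_le => // a Aa.
  by apply: le_lt_trans sup_lt_m; apply: ereal_sup_ubound; exists a.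
by apply: ge_ereal_sup => _ [a Aa <-]; apply: le_upper_coarse_spectrum => _ ->.
Qed.
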